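(* There exists a sequence $\{a_n\}_{n\geq 0}$ with $a_n\in\{0,1\}$ for all $n$ that does not converge, whereas $\{a^*_n\}_{n\geq 0}$ converges and $\{a^p_n\}_{n\geq 0}$ converges for every $0<p<1$.
   Context: For a real sequence $\{a_n\}_{n\geq0}$ and $0<p<1$, $a^*_n=\frac{1}{n+1}\sum_{i=0}^n a_i$ and $a^p_n=\sum_{i=0}^n\binom{n}{i}p^i(1-p)^{n-i}a_i$. *)

From Stdlib Require Import Reals.
From Coquelicot Require Import Coquelicot.
Open Scope R_scope.

Definition cesaro (a : nat -> R) (n : nat) : R :=
  / INR (S n) * sum_f_R0 a n.

Definition euler_mean (p : R) (a : nat -> R) (n : nat) : R :=
  sum_f_R0 (fun i => Binomial.C n i * p ^ i * (1 - p) ^ (n - i) * a i) n.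

(* The indicator of the even numbers, a_n = (1 + (-1)^n)/2, oscillates between 0 and 1.
   Its partial sums differ from (n+1)/2 by at most 1/2, so its Cesaro means tend to 1/2.
   Since a_i = (1^i + (-1)^i)/2 and the Euler mean of i |-> x^i is (p x + 1 - p)^n by the
   binomial theorem, a^p_n = 1/2 + (1 - 2p)^n/2, which tends to 1/2 as |1 - 2p| < 1. *)
From Stdlib Require Import Reals Lra Lia.
From Coquelicot Require Import Coquelicot.
Open Scope R_scope.

Lemma pow_m1_cases (n : nat) : (-1) ^ n = 1 \/ (-1) ^ n = -1.
Proof.
  induction n as [|n IH]; simpl; [left; lra|].
  destruct IH as [H|H]; rewrite H; lra.
Qed.

Lemma is_lim_seq_succ_sub (u : nat -> R) (l : R) :
  is_lim_seq u l -> is_lim_seq (fun n => u (S n) - u n) 0.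
Proof.
  intro Hu.
  pose proof (proj1 (is_lim_seq_incr_1 u l) Hu) as Hsucc.
  pose proof (is_lim_seq_minus' _ _ _ _ Hsucc Hu) as H.
  now replace (l - l) with 0 in H by ring.
Qed.

Lemma not_ex_finite_lim_seq_jumps (u : nat -> R) (e : R) :
  0 < e -> (forall n, e <= Rabs (u (S n) - u n)) -> ~ ex_finite_lim_seq u.
Proof.
  intros He Hjump [l Hl].
  pose proof (is_lim_seq_abs _ _ (is_lim_seq_succ_sub u l Hl)) as Habs.
  pose proof (is_lim_seq_le _ _ _ _ Hjump (is_lim_seq_const e) Habs) as Hle.
  simpl in Hle. rewrite Rabs_R0 in Hle. lra.
Qed.

Lemma is_lim_seq_inv_INR_S : is_lim_seq (fun n => / INR (S n)) 0.
Proof.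
  pose proof (is_lim_seq_inv (fun n => INR (S n)) p_infty) as H.
  simpl in H. apply H; [|discriminate].
  apply (proj1 (is_lim_seq_incr_1 INR p_infty)), is_lim_seq_INR.
Qed.

Lemma is_lim_seq_bounded_div_INR_S (b : nat -> R) (M : R) :
  (forall n, Rabs (b n) <= M) -> is_lim_seq (fun n => b n / INR (S n)) 0.
Proof.
  intro Hb.
  assert (lim_scal : forall c, is_lim_seq (fun n => c * / INR (S n)) 0).
  { intro c. replace 0 with (c * 0) by ring.
    apply (is_lim_seq_mult' (fun _ => c)); [apply is_lim_seq_const|].
    exact is_lim_seq_inv_INR_S. }
  apply is_lim_seq_le_le with (u := fun n => - M * / INR (S n))
                              (w := fun n => M * / INR (S n));
    [|apply lim_scal|apply lim_scal].
  intro n.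
  assert (Hpos : 0 < / INR (S n)) by (apply Rinv_0_lt_compat, lt_0_INR; lia).
  pose proof (proj1 (Rabs_le_between _ _) (Hb n)) as Hbn.
  unfold Rdiv. split; apply Rmult_le_compat_r; lra.
Qed.

Lemma euler_mean_plus (p : R) (a b : nat -> R) (n : nat) :
  euler_mean p (fun i => a i + b i) n = euler_mean p a n + euler_mean p b n.
Proof.
  unfold euler_mean. rewrite <- sum_plus.
  apply sum_eq; intros i _. ring.
Qed.

Lemma euler_mean_scal (p c : R) (a : nat -> R) (n : nat) :
  euler_mean p (fun i => c * a i) n = c * euler_mean p a n.
Proof.
  unfold euler_mean. rewrite scal_sum.
  apply sum_eq; intros i _. ring.
Qed.

Lemma euler_mean_pow (p x : R) (n : nat) :
  euler_mean p (fun i => x ^ i) n = (p * x + (1 - p)) ^ n.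
Proof.
  unfold euler_mean. rewrite binomial.
  apply sum_eq; intros i _. rewrite Rpow_mult_distr. ring.
Qed.

Definition even_indicator (n : nat) : R := (1 + (-1) ^ n) / 2.

Lemma even_indicator_0_or_1 (n : nat) : even_indicator n = 0 \/ even_indicator n = 1.
Proof.
  unfold even_indicator.
  destruct (pow_m1_cases n) as [H|H]; rewrite H; [right|left]; lra.
Qed.

Lemma not_ex_finite_lim_seq_even_indicator : ~ ex_finite_lim_seq even_indicator.
Proof.
  apply (not_ex_finite_lim_seq_jumps _ 1); [lra|].
  intro n. unfold even_indicator. simpl.
  destruct (pow_m1_cases n) as [H|H]; rewrite H;
    [rewrite Rabs_left | rewrite Rabs_right]; lra.
Qed.

Lemma sum_even_indicator (n : nat) :
  sum_f_R0 even_indicator n = INR (S n) / 2 + (1 + (-1) ^ n) / 4.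
Proof.
  rewrite S_INR.
  induction n as [|n IH]; unfold even_indicator in *; simpl.
  - lra.
  - rewrite IH. destruct n; simpl; lra.
Qed.

Lemma cesaro_even_indicator (n : nat) :
  cesaro even_indicator n = / 2 + ((1 + (-1) ^ n) / 4) / INR (S n).
Proof.
  unfold cesaro. rewrite sum_even_indicator.
  assert (Hpos : 0 < INR (S n)) by (apply lt_0_INR; lia).
  field. lra.
Qed.

Lemma euler_mean_even_indicator (p : R) (n : nat) :
  euler_mean p even_indicator n = / 2 + / 2 * (1 - 2 * p) ^ n.
Proof.
  transitivity (euler_mean p (fun i => / 2 * 1 ^ i + / 2 * (-1) ^ i) n).
  { unfold euler_mean, even_indicator.
    apply sum_eq; intros i _. rewrite pow1. field. }
  rewrite euler_mean_plus, !euler_mean_scal, !euler_mean_pow.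
  replace (p * 1 + (1 - p)) with 1 by ring.
  replace (p * -1 + (1 - p)) with (1 - 2 * p) by ring.
  rewrite pow1. ring.
Qed.

Theorem proposition1 :
  exists a : nat -> R,
    (forall n, a n = 0 \/ a n = 1) /\
    ~ ex_finite_lim_seq a /\
    ex_finite_lim_seq (cesaro a) /\
    (forall p : R, 0 < p < 1 -> ex_finite_lim_seq (euler_mean p a)).
Proof.
  exists even_indicator.
  split; [exact even_indicator_0_or_1|].
  split; [exact not_ex_finite_lim_seq_even_indicator|].
  split.
  - exists (/ 2 + 0).
    apply (is_lim_seq_ext _ _ _ (fun n => eq_sym (cesaro_even_indicator n))).
    apply is_lim_seq_plus'; [apply is_lim_seq_const|].
    apply (is_lim_seq_bounded_div_INR_S _ (1 / 2)). intro n.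
    apply Rabs_le_between.
    destruct (pow_m1_cases n) as [H|H]; rewrite H; lra.
  - intros p Hp. exists (/ 2 + / 2 * 0).
    apply (is_lim_seq_ext _ _ _ (fun n => eq_sym (euler_mean_even_indicator p n))).
    apply is_lim_seq_plus'; [apply is_lim_seq_const|].
    apply (is_lim_seq_mult' (fun _ => / 2)); [apply is_lim_seq_const|].
    apply is_lim_seq_geom.
    apply Rabs_def1; lra.
Qed.
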